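(* Let $\Delta=\{x\in\mathbb{R}^n:\ \ell_i(x)\ge0,\ i=1,\dots,d\}$ be a compact $n$-dimensional Delzant polytope with lattice distances $\ell_i(x)=c_i-\langle u_i,x\rangle$ to its facets, and for $x,y\in\Delta$ let $e^{N\varphi(x,y)}=\prod_{i=1}^d\ell_i(y)^{N\ell_i(x)}e^{-N\ell_i(y)}$ (with $0^0=1$), i.e. $\varphi(x,y)=\sum_i\ell_i(x)\log\ell_i(y)-\ell_i(y)$. Let $f,g\in C^\infty(\Delta)$ and $x\in\Delta$ with $f(x)\neq0$ and $x\notin\operatorname{supp}g$. Then there is a constant $c>0$ such that, for all sufficiently large $N$, $$\Big|\int_\Delta e^{N\varphi(x,y)}g(y)\,dy\Big|\le e^{-cN}\Big|\int_\Delta e^{N\varphi(x,y)}f(y)\,dy\Big|.$$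
   Context: A Delzant polytope is a compact convex polytope $\{x:\langle u_i,x\rangle\le c_i\}$ with $u_i\in(\mathbb{Z}^n)^*$ primitive outward facet normals, $c_i\in\mathbb{Z}$, each vertex lying on exactly $n$ facets whose normals form a $\mathbb{Z}$-basis. $dy$ is Lebesgue measure. *)

From HB Require Import structures.
From mathcomp Require Import all_boot all_order all_algebra.
From mathcomp Require Import all_classical all_reals all_analysis.
Set Implicit Arguments. Unset Strict Implicit. Unset Printing Implicit Defensive.
Import Order.TTheory GRing.Theory Num.Theory.
Import numFieldNormedType.Exports.
Local Open Scope classical_set_scope.
Local Open Scope ring_scope.

Section Delzant.
Variable R : realType.

(* points of R^n are row vectors 'rV[R]_n; coordinate j of y is y ord0 j *)

Definition pairing (n : nat) (u : 'I_n -> int) (y : 'rV[R]_n) : R :=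
  \sum_(j < n) (u j)%:~R * y ord0 j.

Definition ldist (n d : nat) (u : 'I_d -> 'I_n -> int) (c : 'I_d -> int)
  (i : 'I_d) (y : 'rV[R]_n) : R := (c i)%:~R - pairing (u i) y.

Definition polytope (n d : nat) (u : 'I_d -> 'I_n -> int) (c : 'I_d -> int)
  : set 'rV[R]_n := [set y | forall i, 0 <= ldist u c i y].

Definition is_vertex (n : nat) (D : set 'rV[R]_n) (v : 'rV[R]_n) : Prop :=
  D v /\ forall (a b : 'rV[R]_n) (t : R), D a -> D b -> 0 < t < 1 ->
    v = t *: a + (1 - t) *: b -> a = b.

Definition primitive (n : nat) (w : 'I_n -> int) : Prop :=
  forall (k : int) (w' : 'I_n -> int), (forall j, w j = k * w' j) -> `|k| = 1.

Definition Zbasis (n : nat) (w : 'I_n -> 'I_n -> int) : Prop :=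
  (forall z : 'I_n -> int, exists k : 'I_n -> int,
      forall j, z j = \sum_(a < n) k a * w a j) /\
  (forall k : 'I_n -> int, (forall j, \sum_(a < n) k a * w a j = 0) ->
      forall a, k a = 0).

Definition Delzant (n d : nat) (u : 'I_d -> 'I_n -> int) (c : 'I_d -> int)
  : Prop :=
  let D := polytope u c in
  [/\ compact D,
      (* n-dimensional: nonempty interior *)
      exists y, forall i, 0 < ldist u c i y,
      forall i, primitive (u i),
      (* each inequality defines a facet (irredundant description) *)
      forall i, exists y, ldist u c i y = 0 /\
                  forall i', i' != i -> 0 < ldist u c i' y &
      forall v, is_vertex D v ->
        exists e : 'I_n -> 'I_d, [/\ injective e,
          forall i, ldist u c i v = 0 <-> exists a, e a = i &
          Zbasis (fun a => u (e a))]].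

(* smoothness: C^k on R^n via iterated directional derivatives *)
Fixpoint Ck (n : nat) (k : nat) (F : 'rV[R]_n -> R) : Prop :=
  match k with
  | 0 => continuous F
  | k'.+1 => (forall a v, derivable F a v) /\ forall v, Ck k' ('D_v F)
  end.

(* f in C^oo(D): f is the restriction to D of a smooth function on R^n *)
Definition smooth_on (n : nat) (D : set 'rV[R]_n) (f : 'rV[R]_n -> R) : Prop :=
  exists F : 'rV[R]_n -> R, (forall k, Ck k F) /\ forall y, D y -> F y = f y.

Definition supp_on (n : nat) (D : set 'rV[R]_n) (g : 'rV[R]_n -> R)
  : set 'rV[R]_n := closure [set y | D y /\ g y != 0].

(* Lebesgue integral over R^n, computed as an iterated integral of
   one-dimensional Lebesgue integrals (Fubini) *)
Fixpoint iint (n : nat) : ('rV[R]_n -> R) -> R :=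
  match n return ('rV[R]_n -> R) -> R with
  | 0 => fun h => h 0
  | m.+1 => fun h => Rintegral (@lebesgue_measure R) setT
      (fun t : R => iint (fun y : 'rV[R]_m =>
          h (row_mx (const_mx t : 'rV[R]_1) y : 'rV[R]_(m.+1))))
  end.

Definition int_on (n : nat) (D : set 'rV[R]_n) (h : 'rV[R]_n -> R) : R :=
  iint (fun y => \1_D y * h y).

(* e^{N phi(x,y)} = prod_i l_i(y)^{N l_i(x)} e^{-N l_i(y)}, with 0^0 = 1 *)
Definition weight (n d : nat) (u : 'I_d -> 'I_n -> int) (c : 'I_d -> int)
  (N : nat) (x y : 'rV[R]_n) : R :=
  \prod_(i < d) (ldist u c i y `^ (N%:R * ldist u c i x)
                 * expR (- (N%:R * ldist u c i y))).

End Delzant.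

Arguments polytope R {n d} u c _.

From Pilot Require Import Defs.
From HB Require Import structures.
From mathcomp Require Import all_boot all_order all_algebra.
From mathcomp Require Import all_classical all_reals all_analysis.
From mathcomp Require Import lra ring.
Set Implicit Arguments. Unset Strict Implicit. Unset Printing Implicit Defensive.
Import Order.TTheory GRing.Theory Num.Theory.
Import numFieldNormedType.Exports.
Local Open Scope classical_set_scope.
Local Open Scope ring_scope.

(* On the polytope the weight is e^{N phi(x,y)} = expphi x y ^+ N, where
   expphi x y = prod_i l_i(y)^{l_i(x)} e^{-l_i(y)}.  Since t |-> t^a e^{-t} has its
   strict maximum at t = a and a compact polytope has no recession direction,
   expphi x attains its maximum P only at x, so expphi x <= th P with th < 1 away
   from any neighbourhood of x.  As g vanishes near x, the g-integral is
   O((th_g P)^N).  Near x, f keeps the sign of f(x) and expphi x > th P for any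
   th < 1, so on a small ball inside the polytope the f-integrand is at least
   c (th P)^N, while its negative part is O((th_1 P)^N); any th between
   max(th_g, th_1) and 1 gives the exponential gap.  The integrals are iterated
   one-dimensional Lebesgue integrals of functions not known to be measurable, so
   every estimate compares positive and negative parts with multiples of
   indicators of balls, which needs no measurability. *)

Section integral_on_a_ball.
Variable R : realType.
Local Notation mu := (@lebesgue_measure R).

(* No measurability is needed: the integral of a nonnegative function is the
   supremum of the integrals of its simple minorants. *)
Lemma ge0_le_integralT (f1 f2 : R -> \bar R) : (forall t, 0 <= f1 t)%E ->
  (forall t, f1 t <= f2 t)%E -> (\int[mu]_t f1 t <= \int[mu]_t f2 t)%E.
Proof.
move=> f10 f12.
have f20 t : (0 <= f2 t)%E by exact: le_trans (f10 t) (f12 t).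
rewrite !ge0_integralTE//.
apply: ge_ereal_sup => _ [h hf <-]; apply: ereal_sup_ubound; exists h => //.
by move=> t; exact: le_trans (hf t) (f12 t).
Qed.

Lemma integral_scaled_indic_ball (k b s : R) : 0 <= k -> 0 <= s ->
  (\int[mu]_t (k * \1_(ball b s) t)%:E = (k * (s *+ 2))%:E)%E.
Proof.
move=> k0 s0; have mB := measurable_realfun.measurable_ball b s.
under eq_integral do rewrite EFinM.
rewrite ge0_integralZl_EFin//.
- rewrite integral_indic// setIT EFinM; congr (_ * _)%E.
  exact: lebesgue_measure_ball.
- exact/measurable_realfun.measurable_EFinP/measurable_realfun.measurable_indic.
Qed.

Lemma ge0_integral_le_ball (phi : R -> \bar R) (b s k : R) : 0 <= k -> 0 <= s ->
  (forall t, 0 <= phi t)%E -> (forall t, phi t <= (k * \1_(ball b s) t)%:E)%E ->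
  (\int[mu]_t phi t <= (k * (s *+ 2))%:E)%E.
Proof.
move=> k0 s0 phi0 phik; rewrite -(integral_scaled_indic_ball b)//.
exact: ge0_le_integralT.
Qed.

Lemma integral_ge_ball (phi : R -> \bar R) (q r k : R) : 0 <= k -> 0 <= r ->
  (forall t, (k * \1_(ball q r) t)%:E <= phi t)%E ->
  ((k * (r *+ 2))%:E <= \int[mu]_t phi t)%E.
Proof.
move=> k0 r0 kphi; rewrite -(integral_scaled_indic_ball q)//.
by apply: ge0_le_integralT => // t; rewrite lee_fin mulr_ge0.
Qed.

Lemma ge0_bounded_fineK (X : \bar R) (y : R) : (0 <= X)%E -> (X <= y%:E)%E ->
  (fine X)%:E = X.
Proof. by case: X. Qed.

Section supported_in_a_ball.
Variables (g : R -> R) (b s k : R).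
Hypotheses (s0 : 0 <= s) (g_supp : forall t, ~ ball b s t -> g t = 0)
  (g_bound : forall t, `|g t| <= k).

Let k0 : 0 <= k. Proof. exact: le_trans (g_bound 0). Qed.

Lemma integral_funepos_le_ball :
  (\int[mu]_t (EFin \o g)^\+ t <= (k * (s *+ 2))%:E)%E.
Proof.
apply: (ge0_integral_le_ball (b := b)) => // t.
rewrite funeposE indicE; have [Bt|Bt] := pselect (ball b s t).
  by rewrite mem_set// mulr1 ge_max !lee_fin k0 (le_trans (ler_norm _)).
by rewrite memNset// mulr0 /= g_supp// maxxx.
Qed.

Lemma integral_funeneg_le_ball e : 0 <= e -> (forall t, - e <= g t) ->
  (\int[mu]_t (EFin \o g)^\- t <= (e * (s *+ 2))%:E)%E.
Proof.
move=> e0 ge; apply: (ge0_integral_le_ball (b := b)) => // t.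
rewrite funenegE indicE; have [Bt|Bt] := pselect (ball b s t).
  by rewrite mem_set// mulr1 ge_max !lee_fin e0 andbT lerNl.
by rewrite memNset// mulr0 /= g_supp// oppr0 maxxx.
Qed.

Let gk t : - k <= g t.
Proof. by have := g_bound t; rewrite ler_norml => /andP[]. Qed.

Let pos_int := fine (\int[mu]_t (EFin \o g)^\+ t)%E.
Let neg_int := fine (\int[mu]_t (EFin \o g)^\- t)%E.

Let pos_intE : (\int[mu]_t (EFin \o g)^\+ t)%E = pos_int%:E.
Proof. exact/esym/(ge0_bounded_fineK (integral_ge0 _ _) integral_funepos_le_ball). Qed.

Let neg_intE : (\int[mu]_t (EFin \o g)^\- t)%E = neg_int%:E.
Proof.
exact/esym/(ge0_bounded_fineK (integral_ge0 _ _) (integral_funeneg_le_ball k0 gk)).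
Qed.

Let pos_int_ge0 : 0 <= pos_int.
Proof. by apply/fine_ge0/integral_ge0 => t _; rewrite funeposE le_max lexx orbT. Qed.

Let pos_int_le : pos_int <= k * (s *+ 2).
Proof. by rewrite -lee_fin -pos_intE integral_funepos_le_ball. Qed.

Let neg_int_ge0 : 0 <= neg_int.
Proof. by apply/fine_ge0/integral_ge0 => t _; rewrite funenegE le_max lexx orbT. Qed.

Let neg_int_le e : 0 <= e -> (forall t, - e <= g t) -> neg_int <= e * (s *+ 2).
Proof. by move=> e0 ge; rewrite -lee_fin -neg_intE integral_funeneg_le_ball. Qed.

Let Rintegral_funeposneg : Rintegral mu setT g = pos_int - neg_int.
Proof. by rewrite /Rintegral integralE pos_intE neg_intE. Qed.

Lemma Rintegral_abs_le_ball : `|Rintegral mu setT g| <= k * (s *+ 2).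
Proof.
have := neg_int_le k0 gk; rewrite Rintegral_funeposneg ler_norml.
have := pos_int_le; have := pos_int_ge0; have := neg_int_ge0; lra.
Qed.

Lemma Rintegral_ge_ball (q r a e : R) : 0 <= r -> 0 <= e ->
  (forall t, - e <= g t) -> (forall t, ball q r t -> a <= g t) ->
  a * (r *+ 2) - e * (s *+ 2) <= Rintegral mu setT g.
Proof.
move=> r0 e0 ge ga.
have pos_int_ge : Num.max a 0 * (r *+ 2) <= pos_int.
  rewrite -lee_fin -pos_intE.
  apply: (integral_ge_ball (q := q)) => [||t]; rewrite ?le_max ?lexx ?orbT//.
  rewrite funeposE indicE; have [Bt|Bt] := pselect (ball q r t).
    by rewrite mem_set// mulr1 -EFin_max lee_fin ge_max !le_max (ga t Bt) lexx !orbT.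
  by rewrite memNset// mulr0 le_max lexx orbT.
have : a * (r *+ 2) <= Num.max a 0 * (r *+ 2).
  by rewrite ler_wpM2r ?mulrn_wge0 ?le_max ?lexx.
have := neg_int_le e0 ge; rewrite Rintegral_funeposneg; lra.
Qed.

End supported_in_a_ball.
End integral_on_a_ball.

Section iterated_integral.
Variable R : realType.
Local Notation mu := (@lebesgue_measure R).

Definition cube n (q : 'rV[R]_n) (r : R) (y : 'rV[R]_n) : Prop :=
  forall j, ball (q ord0 j) r (y ord0 j).

Lemma cube_row m (z : 'rV[R]_(1 + m)) r t (y : 'rV[R]_m) :
  cube z r (row_mx (const_mx t) y) <-> ball (z ord0 ord0) r t /\ cube (rsubmx z) r y.
Proof.
have E : lshift m ord0 = ord0 :> 'I_(1 + m) by apply: val_inj.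
split.
- move=> h; split; first by have := h (lshift m ord0); rewrite row_mxEl mxE E.
  by move=> j; have := h (rshift 1 j); rewrite row_mxEr mxE.
- move=> [h1 h2] j; case: (splitP j) => [j0 Hj|j1 Hj].
    have -> : j = lshift m j0 by apply: val_inj.
    by rewrite row_mxEl mxE (ord1 j0) E.
  have -> : j = rshift 1 j1 by apply: val_inj.
  by rewrite row_mxEr; have := h2 j1; rewrite mxE.
Qed.

Lemma cube_ball n (q y : 'rV[R]_n) (r : R) : 0 < r -> cube q r y <-> ball q r y.
Proof.
move=> r0; split; last by case=> _ h j; exact: h.
by move=> h; split => // i j; rewrite (ord1 i); exact: h.
Qed.

Local Notation slice h t := (fun y => h (row_mx (const_mx t : 'rV_1) y : 'rV_(1 + _))).

Lemma iint_eq0 n (h : 'rV[R]_n -> R) : (forall y, h y = 0) -> iint h = 0.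
Proof.
elim: n h => [|n IH] h h0 /=; first exact: h0.
rewrite (_ : (fun t => _) = cst 0); first by rewrite Rintegral_cst// mul0r.
by apply/funext => t; apply: IH.
Qed.

Lemma cube_slice_supp n (h : 'rV[R]_(1 + n) -> R) (b : 'rV[R]_(1 + n)) (s t : R) :
  (forall y, ~ cube b s y -> h y = 0) ->
  forall y, ~ cube (rsubmx b) s y -> slice h t y = 0.
Proof. by move=> h_supp y ny; apply: h_supp => /cube_row[]. Qed.

Lemma iint_slice_eq0 n (h : 'rV[R]_(1 + n) -> R) (b : 'rV[R]_(1 + n)) (s t : R) :
  (forall y, ~ cube b s y -> h y = 0) -> ~ ball (b ord0 ord0) s t ->
  iint (slice h t) = 0.
Proof. by move=> h_supp nt; apply: iint_eq0 => y; apply: h_supp => /cube_row[]. Qed.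

Lemma iint_abs_le n (h : 'rV[R]_n -> R) (b : 'rV[R]_n) (s K : R) : 0 <= s ->
  (forall y, ~ cube b s y -> h y = 0) -> (forall y, `|h y| <= K) ->
  `|iint h| <= K * (s *+ 2) ^+ n.
Proof.
elim: n h b K => [|n IH] h b K s0 h_supp h_bound.
  by rewrite expr0 mulr1; apply: h_bound.
have slice_supp t := @cube_slice_supp n h b s t h_supp.
rewrite exprSr mulrA.
apply: (@Rintegral_abs_le_ball _ (fun t => iint (slice h t)) (b ord0 ord0)) => // t.
  exact: iint_slice_eq0.
exact: IH _ _ _ s0 (slice_supp t) (fun y => h_bound _).
Qed.

Lemma iint_ge n (q b : 'rV[R]_n) (r s : R) : 0 <= r -> 0 <= s ->
  exists2 Z, 0 <= Z & forall (h : 'rV[R]_n -> R) (m e K : R), 0 <= e ->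
    (forall y, ~ cube b s y -> h y = 0) -> (forall y, `|h y| <= K) ->
    (forall y, - e <= h y) -> (forall y, cube q r y -> m <= h y) ->
    m * (r *+ 2) ^+ n - e * Z <= iint h.
Proof.
move=> r0 s0; elim: n q b => [|n IH] q b.
  exists 0 => // h m e K _ _ _ _ hq.
  by rewrite expr0 mulr1 mulr0 subr0; apply: hq => -[].
have [Z Z0 HZ] := IH (rsubmx (q : 'rV_(1 + n))) (rsubmx (b : 'rV_(1 + n))).
exists (Z * (r *+ 2) + ((r *+ 2) ^+ n + Z) * (s *+ 2)).
  by rewrite addr_ge0 ?mulr_ge0 ?addr_ge0 ?exprn_ge0 ?mulrn_wge0.
move=> h m e K e0 h_supp h_bound h_ge h_cube.
have slice_supp t := @cube_slice_supp n h b s t h_supp.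
have slice_ge (t : R) : - (e * ((r *+ 2) ^+ n + Z)) <= iint (slice h t).
  rewrite mulrDr opprD -[X in X - _]mulNr.
  by apply: (HZ _ _ _ K e0 (slice_supp t)) => // y *; apply: h_ge.
have slice_cube (t : R) : ball (q ord0 ord0) r t ->
    m * (r *+ 2) ^+ n - e * Z <= iint (slice h t).
  move=> Bt; apply: (HZ _ _ _ K e0 (slice_supp t)) => // y Qy.
  by apply: h_cube; apply/cube_row.
have slice_bound (t : R) : `|iint (slice h t)| <= K * (s *+ 2) ^+ n.
  exact: iint_abs_le s0 (slice_supp t) (fun y => h_bound _).
have := @Rintegral_ge_ball _ (fun t => iint (slice h t)) (b ord0 ord0) s _ s0
  (fun t => iint_slice_eq0 h_supp) slice_bound _ _ _ _ r0 _ slice_ge slice_cube.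
have -> : iint h = Rintegral mu setT (fun t => iint (slice h t)) by [].
have be0 : 0 <= e * ((r *+ 2) ^+ n + Z).
  by rewrite mulr_ge0 ?addr_ge0 ?exprn_ge0 ?mulrn_wge0.
move=> /(_ be0); apply: le_trans; rewrite exprSr le_eqVlt; apply/orP; left.
by apply/eqP; ring.
Qed.

Lemma RintegralN (g : R -> R) :
  Rintegral mu setT (fun t => - g t) = - Rintegral mu setT g.
Proof.
rewrite /Rintegral (_ : (fun t => (- g t)%:E) = (\- (EFin \o g))%E); last first.
  by apply/funext => t; rewrite EFinN.
rewrite [in LHS]integralE [in RHS]integralE funeposN funenegN.
have := integral_ge0 mu (fun t _ => funepos_ge0 (EFin \o g) t).
have := integral_ge0 mu (fun t _ => funeneg_ge0 (EFin \o g) t).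
case: (\int[_]_x _)%E => [a| |]; case: (\int[_]_x _)%E => [b| |] //= _ _.
- by rewrite opprB.
all: by rewrite oppr0. (* an infinite part makes both sides the junk value 0 *)
Qed.

Lemma iintN n (h : 'rV[R]_n -> R) : iint (fun y => - h y) = - iint h.
Proof.
elim: n h => [|n IH] h //=.
by rewrite -RintegralN; congr Rintegral; apply/funext => t; exact: IH.
Qed.

End iterated_integral.

Section integral_over_a_compact_set.
Variables (R : realType) (n : nat) (D : set 'rV[R]_n).
Hypothesis cD : compact D.

Lemma int_onN (h : 'rV[R]_n -> R) : int_on D (fun y => - h y) = - int_on D h.
Proof. by rewrite /int_on -iintN; congr iint; apply/funext => y; rewrite mulrN. Qed.

Lemma compact_subset_ball (x : 'rV[R]_n) : exists2 S, 0 < S & D `<=` ball x S.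
Proof.
have [M [_ HM]] := compact_bounded cD.
have HM1 : globally D [set y | `|y| <= `|M| + 1].
  by apply: HM; apply: le_lt_trans (ler_norm _) _; rewrite ltrDl.
exists (`|x| + `|M| + 2); first by rewrite -addrA ltr_wpDl.
move=> y Dy; rewrite -ball_normE /=.
have := HM1 y Dy; rewrite /= => hy.
apply: le_lt_trans (ler_normB _ _) _; lra.
Qed.

Let indic_mul_in (h : 'rV[R]_n -> R) y : D y -> \1_D y * h y = h y.
Proof. by move=> Dy; rewrite indicE mem_set// mul1r. Qed.

Let indic_mul_notin (h : 'rV[R]_n -> R) y : ~ D y -> \1_D y * h y = 0.
Proof. by move=> Dy; rewrite indicE memNset// mul0r. Qed.

Let indic_mul_supp (h : 'rV[R]_n -> R) x S : 0 < S -> D `<=` ball x S ->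
  forall y, ~ cube x S y -> \1_D y * h y = 0.
Proof.
by move=> S0 DS y ny; rewrite indic_mul_notin// => /DS /(cube_ball _ _ S0).
Qed.

Lemma int_on_abs_le : exists V, forall (h : 'rV[R]_n -> R) (K : R), 0 <= K ->
  (forall y, D y -> `|h y| <= K) -> `|int_on D h| <= K * V.
Proof.
have [S S0 DS] := compact_subset_ball 0; exists ((S *+ 2) ^+ n) => h K K0 hK.
apply: iint_abs_le (ltW S0) (indic_mul_supp h S0 DS) _ => y.
have [Dy|Dy] := pselect (D y); first by rewrite indic_mul_in//; apply: hK.
by rewrite indic_mul_notin ?normr0.
Qed.

Lemma int_on_ge (q : 'rV[R]_n) (rho : R) : 0 < rho -> ball q rho `<=` D ->
  exists2 W, 0 < W & exists2 Z, 0 <= Z &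
    forall (h : 'rV[R]_n -> R) (m e K : R), 0 <= e ->
    (forall y, D y -> `|h y| <= K) -> (forall y, D y -> - e <= h y) ->
    (forall y, ball q rho y -> m <= h y) -> m * W - e * Z <= int_on D h.
Proof.
move=> rho0 BD; have [S S0 DS] := compact_subset_ball q.
have [Z Z0 HZ] := iint_ge q q (ltW rho0) (ltW S0).
exists ((rho *+ 2) ^+ n); first by rewrite exprn_gt0// mulrn_wgt0.
exists Z => // h m e K e0 hK he hm.
have K0 : 0 <= K by apply: le_trans (hK q (BD q (ballxx q rho0))).
apply: HZ (indic_mul_supp h S0 DS) _ _ _ => // y.
- have [Dy|Dy] := pselect (D y); first by rewrite indic_mul_in//; apply: hK.
  by rewrite indic_mul_notin ?normr0.
- have [Dy|Dy] := pselect (D y); first by rewrite indic_mul_in//; apply: he.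
  by rewrite indic_mul_notin// oppr_le0.
- by move=> /(cube_ball _ _ rho0) By; rewrite indic_mul_in ?hm//; apply: BD.
Qed.

End integral_over_a_compact_set.

Section row_functions.
Variables (R : realType) (n : nat).

Lemma continuous_bounded_on_compact (A : set 'rV[R]_n) (G : 'rV[R]_n -> R) :
  compact A -> continuous G -> exists K, forall y, A y -> `|G y| <= K.
Proof.
move=> cA Gc; have [[y0 Ay0]|A0] := pselect (A !=set0); last first.
  by exists 0 => y Ay; exfalso; apply: A0; exists y.
have [z _ z_max] := @EVT_max_rV R n (fun y => `|G y|) A (ex_intro _ y0 Ay0) cA
  (continuous_subspaceT (fun y => continuous_comp (Gc y) (@norm_continuous _ R^o _))).
by exists `|G z| => y Ay; apply: z_max; rewrite inE.
Qed.

Lemma not_supp_vanish (D : set 'rV[R]_n) (g : 'rV[R]_n -> R) (x : 'rV[R]_n) :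
  ~ supp_on D g x -> exists2 r, 0 < r & forall y, D y -> ball x r y -> g y = 0.
Proof.
move=> ns; apply: contrapT => h; apply: ns.
rewrite /supp_on closureEnbhs /= => P B AP /nbhs_ballP[r r0 rB].
apply: contrapT => PB; apply: h; exists r => // y Dy xy.
apply: contrapT => gy; apply: PB; exists y; split; last exact: rB.
by apply: AP; split => //; apply/eqP.
Qed.

Lemma continuous_gt_ball (F : 'rV[R]_n -> R) (x : 'rV[R]_n) (a : R) :
  {for x, continuous F} -> a < F x ->
  exists2 r, 0 < r & forall y, ball x r y -> a < F y.
Proof.
move=> Fc aF; have /cvgrPdist_lt /(_ (F x - a)) := Fc.
rewrite subr_gt0 => /(_ aF) /nbhs_ballP[r r0 h]; exists r => // y /h.
rewrite /= ltr_norml => /andP[_]; lra.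
Qed.

End row_functions.

Section polytope_geometry.
Variables (R : realType) (n d : nat) (u : 'I_d -> 'I_n -> int) (c : 'I_d -> int).
Local Notation D := (polytope R u c).
Local Notation ldist := (@Defs.ldist R n d u c).

Lemma pairing_linear (w : 'I_n -> int) (a b : R) (y z : 'rV[R]_n) :
  pairing w (a *: y + b *: z) = a * pairing w y + b * pairing w z.
Proof.
rewrite /pairing !mulr_sumr -big_split /=; apply: eq_bigr => j _.
by rewrite !mxE; ring.
Qed.

Lemma pairing_continuous (w : 'I_n -> int) : continuous (@pairing R n w).
Proof.
rewrite /pairing; apply: continuous_big => [|j _ z]; first exact: add_continuous.
exact: cvgM (cvg_cst _) (@coord_continuous R 1 n ord0 j z).
Qed.

Lemma ldist_continuous i : continuous (ldist i).
Proof.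
by move=> y; apply: continuousB; [exact: cst_continuous|exact: pairing_continuous].
Qed.

Lemma ldist_affine i (a : R) (y z : 'rV[R]_n) :
  ldist i ((1 - a) *: y + a *: z) = (1 - a) * ldist i y + a * ldist i z.
Proof. by rewrite /Defs.ldist pairing_linear; ring. Qed.

Lemma polytope_recession_trivial (x v : 'rV[R]_n) : compact D -> D x ->
  (forall i, pairing (u i) v = 0) -> v = 0.
Proof.
move=> cD Dx v_ker; apply/eqP/negPn/negP => v_neq0.
have [S S0 DS] := compact_subset_ball cD x.
have v0 : 0 < `|v| by rewrite normr_gt0.
pose y := x + (S / `|v|) *: v.
have Dy : D y.
  move=> i; rewrite /y /Defs.ldist -[x]scale1r pairing_linear v_ker mulr0 addr0.
  by rewrite mul1r; exact: Dx.
have := DS y Dy; rewrite -ball_normE /= /y opprD addrA subrr add0r normrN normrZ.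
by rewrite ger0_norm ?divr_ge0 ?ltW// divfK ?gt_eqF// ltxx.
Qed.

Lemma polytope_ldist_inj (x y : 'rV[R]_n) : compact D -> D x ->
  (forall i, ldist i y = ldist i x) -> y = x.
Proof.
move=> cD Dx ldist_eq; apply/eqP; rewrite -subr_eq0; apply/eqP.
apply: polytope_recession_trivial cD Dx _ => i.
rewrite -scaleN1r -[y]scale1r pairing_linear.
have := ldist_eq i; rewrite /Defs.ldist; lra.
Qed.

Lemma polytope_inner_ball (x y0 : 'rV[R]_n) (r : R) : D x ->
  (forall i, 0 < ldist i y0) -> 0 < r ->
  exists q : 'rV[R]_n, exists2 rho, 0 < rho & ball q rho `<=` D `&` ball x r.
Proof.
move=> Dx y0_int r0.
pose e := r / (r + `|x - y0|).
have den : 0 < r + `|x - y0| by rewrite ltr_wpDr.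
have e0 : 0 < e by rewrite divr_gt0.
have e1 : e <= 1 by rewrite ler_pdivrMr// mul1r lerDl.
pose q := (1 - e) *: x + e *: y0.
have q_int i : 0 < ldist i q.
  rewrite ldist_affine; apply: ltr_wpDl; last by rewrite mulr_gt0.
  by rewrite mulr_ge0 ?Dx// subr_ge0.
have Bq : ball x r q.
  rewrite -ball_normE /= /q.
  have -> : x - ((1 - e) *: x + e *: y0) = e *: (x - y0).
    by rewrite scalerBl scale1r scalerBr opprD opprB addrA addrCA subrr addr0.
  by rewrite normrZ ger0_norm ?ltW// /e mulrAC ltr_pdivrMr// ltr_pM2l// ltrDr.
have : \forall y \near q, (forall i, 0 < ldist i y) /\ ball x r y.
  near=> y; split; last by near: y; exact: ball_open x r q Bq.
  near: y; apply: filter_forall => i.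
  exact: cvgr_gt (@ldist_continuous i q) _ (q_int i).
move=> /nbhs_ballP[rho rho0 h]; exists q, rho => // y /h[y_int Bxy]; split => //.
by move=> i; exact/ltW.
Unshelve. all: by end_near. Qed.

End polytope_geometry.

Section powR_expRN.
Variable R : realType.

Lemma powR_expRN_lt (a t : R) : 0 <= a -> 0 <= t -> t != a ->
  t `^ a * expR (- t) < a `^ a * expR (- a).
Proof.
move=> a0 t0 ta; have [a00|a_neq0] := eqVneq a 0.
  rewrite a00 in ta *.
  by rewrite !powRr0 !mul1r oppr0 expR0 expR_lt1 oppr_lt0 lt_def ta t0.
have ap : 0 < a by rewrite lt_def a_neq0.
have [->|t_neq0] := eqVneq t 0.
  by rewrite powR0// mul0r mulr_gt0 ?expR_gt0 ?powR_gt0.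
have tp : 0 < t by rewrite lt_def t_neq0.
rewrite /powR !gt_eqF// -!expRD ltr_expR.
(* with w = ln (t / a), this is 1 + w < exp w, i.e. a w < t - a *)
set w := ln t - ln a.
have ew : expR w = t / a by rewrite expRB !lnK ?posrE.
have w_neq0 : w != 0.
  by apply: contra ta; rewrite subr_eq0 => /eqP/ln_inj -> //; rewrite posrE.
have := expR_gt1Dx w_neq0.
rewrite ew ltr_pdivlMr// mulrDl mul1r (mulrC w) /w mulrBr; lra.
Qed.

Lemma powR_expRN_le (a t : R) : 0 <= a -> 0 <= t ->
  t `^ a * expR (- t) <= a `^ a * expR (- a).
Proof.
move=> a0 t0; have [->//|ta] := eqVneq t a.
exact/ltW/powR_expRN_lt.
Qed.

Lemma powR_expRN_gt0 (a : R) : 0 <= a -> 0 < a `^ a * expR (- a).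
Proof.
move=> a0; rewrite mulr_gt0 ?expR_gt0//.
have [->|a_neq0] := eqVneq a 0; first by rewrite powRr0.
by rewrite powR_gt0// lt_def a_neq0.
Qed.

Lemma continuous_powR_max0 (a : R) : 0 <= a ->
  continuous (fun t : R => Num.max t 0 `^ a).
Proof.
move=> a0 t0; have [->|a_neq0] := eqVneq a 0.
  by under eq_fun do rewrite powRr0; exact: cvg_cst.
have ap : 0 < a by rewrite lt_def a_neq0.
case: (ltgtP t0 0) => [t0_lt0|t0_gt0|->].
- apply: (cvg_trans (near_eq_cvg (f := cst (Num.max t0 0 `^ a)) _));
    last exact: cvg_cst.
  near=> t; have t_lt0 : t < 0 by near: t; exact: cvgr_lt (@cvg_id _ _) _ t0_lt0.
  by rewrite /= !max_r ?ltW.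
- apply: (cvg_trans (near_eq_cvg (f := fun t => expR (a * ln t)) _)).
    near=> t; have t_gt0 : 0 < t by near: t; exact: cvgr_gt (@cvg_id _ _) _ t0_gt0.
    by rewrite /= max_l ?ltW// /powR gt_eqF.
  rewrite /= max_l ?ltW// /powR gt_eqF//.
  apply: (@continuous_comp _ _ _ (fun t => a * ln t) expR); last exact: continuous_expR.
  by apply: cvgM; [exact: cvg_cst|exact: continuous_ln].
- rewrite /continuous_at /= maxxx powR0//; apply/cvgrPdist_lt => e e0.
  apply/nbhs_ballP; exists (expR (ln e / a)); first by rewrite /= expR_gt0.
  move=> t; rewrite /= sub0r normrN => ht.
  have [t_gt0|_] := ltP 0 t; last by rewrite powR0// subrr normr0.
  rewrite sub0r normrN ger0_norm ?powR_ge0//.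
  have -> : e = expR (ln e / a) `^ a.
    by rewrite /powR gt_eqF ?expR_gt0// expRK mulrC divfK// lnK.
  apply: gt0_ltr_powR => //; rewrite ?inE ?nnegrE ?ltW ?expR_gt0//.
  by apply: le_lt_trans ht; rewrite ler_norm.
Unshelve. all: by end_near. Qed.

End powR_expRN.

Section expphi.
Variables (R : realType) (n d : nat) (u : 'I_d -> 'I_n -> int) (c : 'I_d -> int).
Local Notation D := (polytope R u c).
Local Notation ldist := (@Defs.ldist R n d u c).

(* e^{phi(x, y)}; clamping at 0 makes it continuous on the whole space
   without changing it on the polytope. *)
Definition expphi (x y : 'rV[R]_n) : R :=
  \prod_i (Num.max (ldist i y) 0 `^ ldist i x * expR (- ldist i y)).

Lemma expphi_ge0 x y : 0 <= expphi x y.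
Proof. by apply: prodr_ge0 => i _; rewrite mulr_ge0 ?powR_ge0 ?expR_ge0. Qed.

Lemma expphi_continuous x : D x -> continuous (expphi x).
Proof.
move=> Dx; apply: continuous_big => [|i _ y]; first exact: mul_continuous.
have y_filter : Filter (nbhs y) by exact: nbhs_filter.
apply: cvgM.
  apply: (@continuous_comp _ _ _ (ldist i) (fun t => Num.max t 0 `^ ldist i x)).
    exact: ldist_continuous.
  exact: continuous_powR_max0.
apply: (@continuous_comp _ _ _ (fun y => - ldist i y) expR).
  exact/continuousN/ldist_continuous.
exact: continuous_expR.
Qed.

Lemma weight_expphi N x y : D y -> weight u c N x y = expphi x y ^+ N.
Proof.
move=> Dy; rewrite /weight /expphi -prodrXl; apply: eq_bigr => i _.
rewrite exprMn max_l ?Dy// (mulrC N%:R) powRrM powR_mulrn ?powR_ge0//.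
by rewrite -mulrN expRM_natl.
Qed.

Let expphi_xx x : D x ->
  expphi x x = \prod_i (ldist i x `^ ldist i x * expR (- ldist i x)).
Proof. by move=> Dx; apply: eq_bigr => i _; rewrite max_l ?Dx. Qed.

Lemma expphi_gt0 x : D x -> 0 < expphi x x.
Proof.
by move=> Dx; rewrite expphi_xx//; apply: prodr_gt0 => i _; exact: powR_expRN_gt0.
Qed.

Lemma expphi_le x y : D x -> D y -> expphi x y <= expphi x x.
Proof.
move=> Dx Dy; rewrite expphi_xx//; apply: ler_prod => i _.
by rewrite mulr_ge0 ?powR_ge0 ?expR_ge0//= max_l ?Dy// powR_expRN_le.
Qed.

Lemma expphi_lt x y : compact D -> D x -> D y -> y != x -> expphi x y < expphi x x.
Proof.
move=> cD Dx Dy yx.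
have [i ldist_neq] : exists i, ldist i y != ldist i x.
  apply: contrapT => ldist_eq; move/eqP: yx; apply.
  apply: polytope_ldist_inj cD Dx _ => i; apply/eqP/negPn/negP => ne.
  by apply: ldist_eq; exists i.
rewrite expphi_xx// /expphi (bigD1 i)//= [X in _ < X](bigD1 i)//= max_l ?Dy//.
apply: (@le_lt_trans _ _ ((ldist i y `^ ldist i x * expR (- ldist i y)) *
    \prod_(j | j != i) (ldist j x `^ ldist j x * expR (- ldist j x)))).
  rewrite ler_wpM2l ?mulr_ge0 ?powR_ge0 ?expR_ge0//; apply: ler_prod => j _.
  by rewrite mulr_ge0 ?powR_ge0 ?expR_ge0//= max_l ?Dy// powR_expRN_le.
rewrite ltr_pM2r ?powR_expRN_lt//.
by apply: prodr_gt0 => j _; exact: powR_expRN_gt0.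
Qed.

Lemma expphi_gap x r : compact D -> D x -> 0 < r ->
  exists2 th, 0 <= th < 1 &
    forall y, D y -> ~ ball x r y -> expphi x y <= th * expphi x x.
Proof.
move=> cD Dx r0; pose K := D `&` ~` ball x r.
have cK : compact K by apply: compact_closedI => //; exact/open_closedC/ball_open.
have P0 := expphi_gt0 Dx.
have [[y0 Ky0]|K0] := pselect (K !=set0); last first.
  by exists 0 => [|y Dy ny]; [rewrite lexx ltr01|exfalso; apply: K0; exists y].
have [z] := @EVT_max_rV R n (expphi x) K (ex_intro _ y0 Ky0) cK
  (continuous_subspaceT (expphi_continuous Dx)).
rewrite inE => -[Dz nz] z_max.
have zx : z != x by apply/eqP => zx; apply: nz; rewrite zx; exact: ballxx.
exists (expphi x z / expphi x x).
  by rewrite divr_ge0 ?expphi_ge0 ?ltW//= ltr_pdivrMr// mul1r expphi_lt.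
by move=> y Dy ny; rewrite divfK ?gt_eqF//; apply: z_max; rewrite inE.
Qed.

End expphi.

Section limits.
Variable R : realType.

Lemma geometric_eventually_le (q A B : R) : 0 <= q < 1 -> 0 < B ->
  \forall N \near \oo, A * q ^+ N <= B.
Proof.
move=> /andP[q0 q1] B0.
have : A * q ^+ N @[N --> \oo] --> A * 0.
  by apply: cvgM; [exact: cvg_cst|apply: cvg_expr; rewrite ger0_norm].
rewrite mulr0 => /cvgr_lt /(_ _ B0); apply: filterS => N; exact: ltW.
Qed.

Lemma geometric_separation (I J : nat -> R) (a b K kappa : R) :
  0 <= a < b -> 0 < kappa ->
  (forall N, I N <= K * a ^+ N) -> (\forall N \near \oo, kappa * b ^+ N <= J N) ->
  exists2 C, 0 < C & \forall N \near \oo, I N <= expR (- (C * N%:R)) * J N.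
Proof.
move=> /andP[a0 ab] kappa0 I_le J_ge.
pose m := (a + b) / 2.
have am : a < m by rewrite /m; lra.
have mb : m < b by rewrite /m; lra.
clearbody m.
have m0 : 0 < m by lra.
have b0 : 0 < b by lra.
have bm : b / m \is Num.pos by rewrite posrE divr_gt0.
exists (ln (b / m)); first by rewrite ln_gt0// ltr_pdivlMr// mul1r; lra.
have small : \forall N \near \oo, K * (a / m) ^+ N <= kappa.
  apply: geometric_eventually_le kappa0.
  by rewrite divr_ge0 ?(ltW m0)//= ltr_pdivrMr// mul1r; lra.
near=> N; have small_N : K * (a / m) ^+ N <= kappa by near: N; exact: small.
rewrite -mulNr (mulrC _ N%:R) expRM_natl expRN (lnK bm) invf_div.
apply: le_trans (I_le N) _.
apply: (@le_trans _ _ ((m / b) ^+ N * (kappa * b ^+ N))); last first.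
  apply: ler_wpM2l; first by rewrite exprn_ge0// divr_ge0// ltW.
  by near: N; exact: J_ge.
rewrite mulrCA -exprMn divfK ?gt_eqF//.
have -> : a ^+ N = (a / m) ^+ N * m ^+ N by rewrite -exprMn divfK ?gt_eqF.
by rewrite mulrA ler_wpM2r// exprn_ge0// ltW.
Unshelve. all: by end_near. Qed.

End limits.

Section weighted_integral_estimates.
Variables (R : realType) (n d : nat) (u : 'I_d -> 'I_n -> int) (c : 'I_d -> int).
Variable x : 'rV[R]_n.
Local Notation D := (polytope R u c).
Local Notation P := (expphi u c x x).
Local Notation int_weight N h := (int_on D (fun y => weight u c N x y * h y)).
Hypotheses (cD : compact D) (Dx : D x).

Let P0 : 0 < P. Proof. exact: expphi_gt0. Qed.

Lemma int_weight_vanishing_le (g G : 'rV[R]_n -> R) : continuous G ->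
  (forall y, D y -> G y = g y) -> ~ supp_on D g x ->
  exists2 th, 0 <= th < 1 &
    exists K, forall N, `|int_weight N g| <= K * (th * P) ^+ N.
Proof.
move=> Gc Gg ns.
have [r r0 g_van] := not_supp_vanish ns.
have [th th01 th_gap] := expphi_gap cD Dx r0.
have [Kg hKg] := continuous_bounded_on_compact cD Gc.
have [V hV] := int_on_abs_le cD.
have Kg0 : 0 <= Kg by apply: le_trans (hKg x Dx).
have thP0 : 0 <= th * P by rewrite mulr_ge0 ?(ltW P0)//; case/andP: th01.
exists th => //; exists (Kg * V) => N; rewrite mulrAC.
apply: hV => [|y Dy]; first by rewrite mulr_ge0// exprn_ge0.
rewrite weight_expphi// normrM ger0_norm ?exprn_ge0 ?expphi_ge0//.
have [Bxy|nBxy] := pselect (ball x r y).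
  by rewrite g_van// normr0 mulr0 mulr_ge0// exprn_ge0.
rewrite mulrC -Gg//; apply: ler_pM; rewrite ?exprn_ge0 ?expphi_ge0 ?hKg//.
by rewrite lerXn2r ?nnegrE ?expphi_ge0 ?th_gap.
Qed.

Lemma int_weight_ge (f F : 'rV[R]_n -> R) (y0 : 'rV[R]_n) : continuous F ->
  (forall y, D y -> F y = f y) -> (forall i, 0 < ldist u c i y0) -> 0 < f x ->
  exists2 th1, th1 < 1 & forall th, th1 < th < 1 ->
    exists2 kappa, 0 < kappa &
      \forall N \near \oo, kappa * (th * P) ^+ N <= int_weight N f.
Proof.
move=> Fc Ff y0_int fx0.
have [r1 r10 f_half] : exists2 r, 0 < r & forall y, ball x r y -> f x / 2 < F y.
  by apply: continuous_gt_ball; [exact: Fc|rewrite Ff//; lra].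
have [th1 /andP[th10 th11] gap1] := expphi_gap cD Dx r10.
have [K hK] := continuous_bounded_on_compact cD Fc.
have K0 : 0 <= K by apply: le_trans (hK x Dx).
exists th1 => // th /andP[th1th th1'].
have th0 : 0 < th by lra.
have [r2 r20 phi_big] :
    exists2 r, 0 < r & forall y, ball x r y -> th * P < expphi u c x y.
  by apply: continuous_gt_ball; [exact: expphi_continuous|rewrite gtr_pMl].
have r0 : 0 < Num.min r1 r2 by rewrite lt_min r10 r20.
have [q [rho rho0 qB]] := polytope_inner_ball Dx y0_int r0.
have [W W0 [Z Z0 HWZ]] := int_on_ge cD rho0 (fun y By => (qB y By).1).
exists (f x / 4 * W); first by rewrite mulr_gt0// divr_gt0.
have small : \forall N \near \oo, K * Z * (th1 / th) ^+ N <= f x / 4 * W.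
  apply: geometric_eventually_le; last by rewrite mulr_gt0// divr_gt0.
  by rewrite divr_ge0 ?(ltW th0)//= ltr_pdivrMr// mul1r.
near=> N.
have weightE y : D y -> weight u c N x y * f y = expphi u c x y ^+ N * F y.
  by move=> Dy; rewrite weight_expphi// Ff.
have phiN_ge0 y : 0 <= expphi u c x y ^+ N by rewrite exprn_ge0// expphi_ge0.
have e0 : 0 <= K * (th1 * P) ^+ N by rewrite mulr_ge0// exprn_ge0// mulr_ge0// ltW.
have bound y : D y -> `|weight u c N x y * f y| <= K * P ^+ N.
  move=> Dy; rewrite weightE// normrM ger0_norm// mulrC.
  apply: ler_pM; rewrite ?hK//.
  by rewrite lerXn2r ?nnegrE ?expphi_ge0 ?(ltW P0) ?expphi_le.
have lower y : D y -> - (K * (th1 * P) ^+ N) <= weight u c N x y * f y.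
  move=> Dy; rewrite weightE//; have [Bxy|nBxy] := pselect (ball x r1 y).
    have Fy0 : 0 < F y by apply: lt_trans (f_half y Bxy); rewrite divr_gt0.
    by apply: (@le_trans _ _ 0); rewrite ?oppr_le0// mulr_ge0// ltW.
  apply: lerNnormlW; rewrite normrM ger0_norm// mulrC.
  apply: ler_pM; rewrite ?hK//.
  by rewrite lerXn2r ?nnegrE ?expphi_ge0 ?mulr_ge0 ?(ltW P0) ?gap1.
have inner y : ball q rho y -> f x / 2 * (th * P) ^+ N <= weight u c N x y * f y.
  move=> /qB[Dy /= Bxy]; rewrite weightE// mulrC.
  have B1 : ball x r1 y by apply: le_ball Bxy; rewrite ge_min lexx.
  have B2 : ball x r2 y by apply: le_ball Bxy; rewrite ge_min lexx orbT.
  apply: ler_pM.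
  - by rewrite exprn_ge0// mulr_ge0// ltW.
  - by rewrite divr_ge0// ltW.
  - rewrite lerXn2r ?nnegrE ?expphi_ge0 ?(ltW (phi_big _ B2))//.
    by rewrite mulr_ge0// ltW.
  - exact/ltW/f_half.
have small_N : K * Z * (th1 / th) ^+ N <= f x / 4 * W by near: N; exact: small.
have T0 : 0 <= (th * P) ^+ N by rewrite exprn_ge0// mulr_ge0// ltW.
have th1PE : (th1 * P) ^+ N = (th1 / th) ^+ N * (th * P) ^+ N.
  by rewrite -exprMn mulrA divfK ?gt_eqF.
have := ler_wpM2r T0 small_N.
have := HWZ _ _ _ _ e0 bound lower inner; rewrite th1PE; lra.
Unshelve. all: by end_near. Qed.

Lemma int_weight_abs_ge (f F : 'rV[R]_n -> R) (y0 : 'rV[R]_n) : continuous F ->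
  (forall y, D y -> F y = f y) -> (forall i, 0 < ldist u c i y0) -> f x != 0 ->
  exists2 th1, th1 < 1 & forall th, th1 < th < 1 ->
    exists2 kappa, 0 < kappa &
      \forall N \near \oo, kappa * (th * P) ^+ N <= `|int_weight N f|.
Proof.
move=> Fc Ff y0_int; rewrite neq_lt => /orP[fx_lt0|fx_gt0].
  have Nfx_gt0 : 0 < - f x by rewrite oppr_gt0.
  have [th1 th11 Hf] := @int_weight_ge (fun y => - f y) (fun y => - F y) y0
    (fun y => continuousN (Fc y)) (fun y Dy => congr1 -%R (Ff y Dy)) y0_int
    Nfx_gt0.
  exists th1 => // th /Hf[kappa kappa0 Hk]; exists kappa => //.
  apply: filterS Hk => N; under eq_fun do rewrite mulrN.
  by rewrite int_onN => /le_trans; apply; rewrite -normrN ler_norm.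
have [th1 th11 Hf] := int_weight_ge Fc Ff y0_int fx_gt0.
exists th1 => // th /Hf[kappa kappa0 Hk]; exists kappa => //.
by apply: filterS Hk => N /le_trans; apply; rewrite ler_norm.
Qed.

End weighted_integral_estimates.

Theorem theorem4p2 (R : realType) (n d : nat)
  (u : 'I_d -> 'I_n -> int) (c : 'I_d -> int)
  (f g : 'rV[R]_n -> R) (x : 'rV[R]_n) :
  Delzant R u c ->
  smooth_on (polytope R u c) f ->
  smooth_on (polytope R u c) g ->
  polytope R u c x ->
  f x != 0 ->
  ~ supp_on (polytope R u c) g x ->
  exists2 C : R, 0 < C &
    \forall N \near \oo,
      `| int_on (polytope R u c) (fun y => weight u c N x y * g y) |
        <= expR (- (C * N%:R))
           * `| int_on (polytope R u c) (fun y => weight u c N x y * f y) |.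
Proof.
move=> [cD [y0 y0_int] _ _ _] [F [Fs Ff]] [G [Gs Gg]] Dx fx0 ns.
have P0 := expphi_gt0 Dx.
have [thg /andP[thg0 thg1] [K g_le]] :=
  int_weight_vanishing_le cD Dx (Gs 0%N) Gg ns.
have [th1 th11 f_ge] := int_weight_abs_ge cD Dx (Fs 0%N) Ff y0_int fx0.
set M := Num.max thg th1.
have thgM : thg <= M by rewrite le_max lexx.
have th1M : th1 <= M by rewrite le_max lexx orbT.
have M1 : M < 1 by rewrite gt_max thg1 th11.
have [|kappa kappa0 f_ge_th] := f_ge ((1 + M) / 2); first by apply/andP; split; lra.
apply: (geometric_separation _ kappa0 g_le f_ge_th).
by rewrite mulr_ge0 ?(ltW P0)//= ltr_pM2r//; lra.
Qed.
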